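(* For every fixed $\alpha>1$ and $c>1$, $\mathrm{amls}(\alpha,c,x)$ is a continuous function of $x$ on the interval $(1,\infty)$.
   Context: Definition of amls: let $\mathcal{H}(x)=-x\ln x-(1-x)\ln(1-x)$ with $0\ln0=0$, $\mathcal{H}(0)=\mathcal{H}(1)=0$. For $\alpha,\beta,c\ge1$ define $\delta_{\alpha,\beta}(\kappa,\tau)=\frac{\frac{\beta}{\alpha}\kappa-\frac{\tau}{\alpha}}{1-\tau}$ if $\tau\ne1$ and $=\frac1\alpha$ if $\tau=1$; $\gamma_{\alpha,\beta}(\kappa,\tau)=(1-\frac\beta\alpha)\frac\kappa\tau+\frac1\alpha$ if $\tau\ne0$ and $=\frac1\alpha$ if $\tau=0$; $g_{\alpha,\beta,c}(\kappa,\tau)=\frac{\beta\kappa-\tau}{\alpha}\ln c-\tau\mathcal{H}(\gamma_{\alpha,\beta}(\kappa,\tau))-(1-\tau)\mathcal{H}(\delta_{\alpha,\beta}(\kappa,\tau))+\mathcal{H}(\kappa)$; $M_{\alpha,\beta}(\kappa)=\frac{\beta-\alpha}{1-\alpha\kappa}\kappa$ if $\alpha<\beta$, $0$ if $\alpha=\beta$, $\frac{\alpha-\beta}{\alpha-1}\kappa$ if $\alpha>\beta$. Then $\mathrm{amls}(\alpha,c,\beta)=\exp\left(\max_{0\le\kappa\le1/\beta}\ \min_{M_{\alpha,\beta}(\kappa)\le\tau\le\beta\kappa} g_{\alpha,\beta,c}(\kappa,\tau)\right)$. *)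

From HB Require Import structures.
From mathcomp Require Import all_boot all_order all_algebra.
From mathcomp Require Import all_classical all_reals all_analysis.
Set Implicit Arguments. Unset Strict Implicit. Unset Printing Implicit Defensive.
Import Order.TTheory GRing.Theory Num.Theory.
Local Open Scope classical_set_scope.
Local Open Scope ring_scope.

Section Amls.
Variable R : realType.

Definition Hent (x : R) : R :=
  (if x == 0 then 0 else - (x * ln x)) +
  (if 1 - x == 0 then 0 else - ((1 - x) * ln (1 - x))).

Definition delta_ab (a b k t : R) : R :=
  if t != 1 then (b / a * k - t / a) / (1 - t) else a^-1.

Definition gamma_ab (a b k t : R) : R :=
  if t != 0 then (1 - b / a) * (k / t) + a^-1 else a^-1.

Definition g_abc (a b c k t : R) : R :=
  (b * k - t) / a * ln c - t * Hent (gamma_ab a b k t)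
  - (1 - t) * Hent (delta_ab a b k t) + Hent k.

Definition M_ab (a b k : R) : R :=
  if a < b then (b - a) / (1 - a * k) * k
  else if a == b then 0
  else (a - b) / (a - 1) * k.

(* inner min over tau in [M, b k], outer max over kappa in [0, 1/b];
   realised as inf / sup of the corresponding value sets *)
Definition inner_min (a b c k : R) : R :=
  inf [set g_abc a b c k t | t in `[M_ab a b k, b * k]].

Definition amls (a c b : R) : R :=
  expR (sup [set inner_min a b c k | k in `[0, b^-1]]).

End Amls.

(* Writing kappa = s / b turns the outer range [0, 1/b] into the fixed interval
   [0, 1] and the inner range into [tau_min b s, s].  In these variables the
   objective, expressed through x ln x, is jointly continuous in (b, s, t), and
   the lower end tau_min is continuous except at (b, s) = (alpha, 1), where it
   is still lower semicontinuous because tau_min alpha 1 = 0.  A Berge-type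
   maximum argument, using compactness of [0, 1] and the extreme value theorem,
   then makes F b = max_s min_t g continuous: lower semicontinuity of tau_min in
   b gives lower semicontinuity of F, upper semicontinuity of tau_min gives upper
   semicontinuity of F, and at the exceptional point the admissible choice
   t = s bounds the inner minimum by g(alpha, 1, 1) = 0 <= F alpha.  Finally
   amls alpha c = exp o F on (1, +oo). *)

From HB Require Import structures.
From mathcomp Require Import all_boot all_order all_algebra.
From mathcomp Require Import all_classical all_reals all_analysis.
From mathcomp Require Import ring lra.
Import Order.TTheory GRing.Theory Num.Theory numFieldNormedType.Exports.
Local Open Scope classical_set_scope.
Local Open Scope ring_scope.
Set Implicit Arguments.
Unset Strict Implicit.

Section BallContinuity.
Variable R : realType.

Lemma compact_near_ball (K : set R) (Q : R -> R -> Prop) (b0 : R) : compact K ->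
  (forall x, K x -> exists2 r, 0 < r &
     forall b y, `|b0 - b| < r -> `|x - y| < r -> K y -> Q b y) ->
  exists2 r, 0 < r & forall b y, `|b0 - b| < r -> K y -> Q b y.
Proof.
move=> /compact_near_coveringP /near_covering_withinP cover loc.
have /nbhs_ballP[r r0 sub] : \forall b \near b0, K `<=` Q b.
  apply: (cover R (nbhs b0) Q (nbhs_filter b0)) => x /loc[r r0 H].
  exists (ball x r, ball b0 r); first by split; exact: nbhsx_ballx.
  by case=> y b [xy bb]; exact: H.
by exists r => // b y bb Ky; exact: sub.
Qed.

Lemma ball_continuous (f : R -> R) (x : R) :
  (forall e, 0 < e -> exists2 r, 0 < r & forall y, `|x - y| < r -> `|f x - f y| < e) ->
  {for x, continuous f}.
Proof.
move=> H; apply/cvgrPdist_lt => e /H[r r0 {}H].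
by apply/nbhs_ballP; exists r.
Qed.

Lemma continuous2_ball (f : R -> R -> R) (x y e : R) :
  {for (x, y), continuous (fun p : R * R => f p.1 p.2)} ->
  0 < e -> exists2 r, 0 < r & forall x' y',
    `|x - x'| < r -> `|y - y'| < r -> `|f x y - f x' y'| < e.
Proof.
move=> /cvgrPdist_lt H /H /nbhs_ballP[r r0 {}H].
by exists r => // x' y' xx yy; exact: (H (x', y')).
Qed.

Lemma continuous3_ball (f : R -> R -> R -> R) (x y z e : R) :
  {for (x, y, z), continuous (fun p : R * R * R => f p.1.1 p.1.2 p.2)} ->
  0 < e -> exists2 r, 0 < r & forall x' y' z',
    `|x - x'| < r -> `|y - y'| < r -> `|z - z'| < r -> `|f x y z - f x' y' z'| < e.
Proof.
move=> /cvgrPdist_lt H /H /nbhs_ballP[r r0 {}H].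
by exists r => // x' y' z' xx yy zz; exact: (H (x', y', z')).
Qed.
End BallContinuity.

Section Maximin.
Variable R : realType.
Variables (P : R -> R -> R -> R) (lo : R -> R -> R).

Definition inner_inf (b s : R) := inf [set P b s t | t in `[lo b s, s]].
Definition maximin (b : R) := sup [set inner_inf b s | s in `[0, 1]].

Variable D : set R.
Hypothesis P_cont : forall b s t, D b ->
  {for (b, s, t), continuous (fun p : R * R * R => P p.1.1 p.1.2 p.2)}.
Hypothesis lo_bounds : forall {b s : R}, D b -> 0 <= s <= 1 -> 0 <= lo b s <= s.

Let P_ball b s t e : D b -> 0 < e -> exists2 r, 0 < r & forall b' s' t',
  `|b - b'| < r -> `|s - s'| < r -> `|t - t'| < r -> `|P b s t - P b' s' t'| < e.
Proof. by move=> Db; apply: continuous3_ball; exact: P_cont. Qed.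

Lemma inner_inf_min b s : D b -> 0 <= s <= 1 ->
  exists2 t, lo b s <= t <= s &
    inner_inf b s = P b s t /\ forall t', lo b s <= t' <= s -> P b s t <= P b s t'.
Proof.
move=> Db s01; have /andP[_ los] := lo_bounds Db s01.
have Pt_cont : {within `[lo b s, s], continuous (P b s)}.
  apply: continuous_subspaceT => t; apply: ball_continuous => e /(P_ball s t Db)[r r0 H].
  by exists r => // t' tt; apply: H; rewrite ?subrr ?normr0.
have [t /[!in_itv]/= tI tmin] := EVT_min los Pt_cont.
have {}tmin t' : lo b s <= t' <= s -> P b s t <= P b s t'.
  by move=> tI'; apply: tmin; rewrite in_itv.
exists t => //; split => //; apply/eqP; rewrite eq_le; apply/andP; split.
  apply: ge_inf; last by exists t => //; rewrite /= in_itv.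
  by exists (P b s t) => _ [t' /= /[!in_itv]/= /tmin ? <-].
apply: lb_le_inf; first by exists (P b s t), t => //; rewrite /= in_itv.
by move=> _ [t' /= /[!in_itv]/= /tmin ? <-].
Qed.

Lemma inner_inf_le b s t : D b -> 0 <= s <= 1 -> lo b s <= t <= s ->
  inner_inf b s <= P b s t.
Proof. by move=> Db s01 tI; have [t' _ [-> /(_ t tI)]] := inner_inf_min Db s01. Qed.

Lemma inner_inf_le_maximin b s : D b -> 0 <= s <= 1 -> inner_inf b s <= maximin b.
Proof.
move=> Db s01; apply: ub_le_sup; last by exists s => //; rewrite /= in_itv.
have diag_cont : {within `[0, 1], continuous (fun s => P b s s)}.
  apply: continuous_subspaceT => x; apply: ball_continuous => e /(P_ball x x Db)[r r0 H].
  by exists r => // y xy; apply: H; rewrite ?subrr ?normr0.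
have [m _ mmax] := EVT_max ler01 diag_cont.
exists (P b m m) => _ [s' /= /[!in_itv]/= s'01 <-].
apply: le_trans (inner_inf_le Db s'01 _) (mmax _ _); last by rewrite in_itv.
by rewrite lexx andbT; case/andP: (lo_bounds Db s'01).
Qed.

Lemma maximin_le b x : (forall s, 0 <= s <= 1 -> inner_inf b s <= x) -> maximin b <= x.
Proof.
move=> H; apply: ge_sup.
  by exists (inner_inf b 0), 0 => //; rewrite /= in_itv /= lexx ler01.
by move=> _ [s /= /[!in_itv]/= /H ? <-].
Qed.

Lemma P00_le_maximin b : D b -> P b 0 0 <= maximin b.
Proof.
have s01 : 0 <= (0 : R) <= 1 by rewrite lexx ler01.
move=> Db; have [t /andP[lot t0] [It _]] := inner_inf_min Db s01.
have /andP[lo0 _] := lo_bounds Db s01.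
have t_eq0 : t = 0 by apply/eqP; rewrite eq_le t0 (le_trans lo0 lot).
by rewrite t_eq0 in It; rewrite -It inner_inf_le_maximin.
Qed.

Lemma maximin_gt b x : x < maximin b -> exists2 s, 0 <= s <= 1 & x < inner_inf b s.
Proof.
move=> /sup_gt[|_ [s /= /[!in_itv]/= s01 <-]]; last by exists s.
by exists (inner_inf b 0), 0 => //; rewrite /= in_itv /= lexx ler01.
Qed.

Variable b0 : R.
Hypothesis Db0 : D b0.

Lemma inner_inf_lsc s : 0 <= s <= 1 ->
  (forall e, 0 < e -> exists2 r, 0 < r &
     forall b, `|b0 - b| < r -> D b -> lo b0 s - e < lo b s) ->
  forall e, 0 < e -> exists2 r, 0 < r & forall b, `|b0 - b| < r -> D b ->
    inner_inf b0 s - e < inner_inf b s.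
Proof.
move=> s01 lo_lsc e e0.
pose Q b t := D b -> lo b s <= t <= s -> inner_inf b0 s - e < P b s t.
have [|r r0 H] := @compact_near_ball _ `[0, 1] Q b0 (@segment_compact _ 0 1).
  move=> x; rewrite /= in_itv /= => x01.
  have [xlo|lox] := ltP x (lo b0 s).
    have [r r0 H] := lo_lsc ((lo b0 s - x) / 2) ltac:(lra).
    exists (Num.min r ((lo b0 s - x) / 2)); first by rewrite lt_min r0 /=; lra.
    move=> b y; rewrite !lt_min => /andP[/H{}H _] /andP[_ /ltr_distlCDr ?] _.
    by move=> /H ? /andP[? _]; lra.
  have [sx|xs] := ltP s x.
    exists (x - s); first lra.
    by move=> b y _; rewrite ltr_distlC => /andP[? _] _ _ /andP[_ ?]; lra.
  have [r r0 H] := P_ball s x Db0 e0.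
  exists r => // b y bb xy _ Db yI.
  have xI : lo b0 s <= x <= s by rewrite lox xs.
  have := inner_inf_le Db0 s01 xI.
  have := H b s y bb; rewrite subrr normr0 => /(_ r0 xy).
  by rewrite ltr_norml => /andP[_ ?]; lra.
exists r => // b bb Db.
have [t tI [-> _]] := inner_inf_min Db s01.
apply: H => //; rewrite /= in_itv /=.
by case/andP: (lo_bounds Db s01) tI => ? ? /andP[? ?]; apply/andP; split; lra.
Qed.

Lemma maximin_lsc :
  (forall s, 0 <= s <= 1 -> forall e, 0 < e -> exists2 r, 0 < r &
     forall b, `|b0 - b| < r -> D b -> lo b0 s - e < lo b s) ->
  forall e, 0 < e -> exists2 r, 0 < r & forall b, `|b0 - b| < r -> D b ->
    maximin b0 - e < maximin b.
Proof.
move=> lo_lsc e e0.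
have [s s01 se] : exists2 s, 0 <= s <= 1 & maximin b0 - e / 2 < inner_inf b0 s.
  by apply: maximin_gt; lra.
have e2 : 0 < e / 2 by lra.
have [r r0 H] := inner_inf_lsc s01 (lo_lsc s s01) e2.
exists r => // b bb Db; have := H b bb Db.
have := inner_inf_le_maximin Db s01; lra.
Qed.

Lemma inner_inf_usc x : 0 <= x <= 1 ->
  (forall e, 0 < e -> exists2 r, 0 < r & forall b s, `|b0 - b| < r -> `|x - s| < r ->
     D b -> 0 <= s <= 1 -> lo b s < lo b0 x + e) ->
  forall e, 0 < e -> exists2 r, 0 < r & forall b s, `|b0 - b| < r -> `|x - s| < r ->
    D b -> 0 <= s <= 1 -> inner_inf b s < inner_inf b0 x + e.
Proof.
move=> x01 lo_usc e e0.
have [t /andP[lot tx] [It _]] := inner_inf_min Db0 x01.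
have [r r0 H] := P_ball x t Db0 e0.
have [r' r'0 H'] := lo_usc (r / 2) ltac:(lra).
exists (Num.min (r / 2) r'); first by rewrite lt_min r'0 andbT; lra.
move=> b s; rewrite !lt_min => /andP[bb /H'{}H'] /andP[xs /H'{}H'] Db s01.
have {}H' := H' Db s01; have /andP[_ los] := lo_bounds Db s01.
suff [t' t'I tt'] : exists2 t', lo b s <= t' <= s & `|t - t'| < r.
  apply: le_lt_trans (inner_inf_le Db s01 t'I) _.
  have := H b s t' ltac:(lra) ltac:(lra) tt'.
  by rewrite It ltr_norml => /andP[? _]; lra.
move: xs; rewrite ltr_distlC => /andP[xs _].
(* Clamp the minimiser [t] of the limit problem into [[lo b s, s]]. *)
have [tlo|lot'] := ltP t (lo b s).
  exists (lo b s); first by rewrite lexx.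
  by rewrite ltr_distlC; apply/andP; split; lra.
have [st|ts] := ltP s t.
  exists s; first by rewrite los lexx.
  by rewrite ltr_distlC; apply/andP; split; lra.
by exists t; rewrite ?lot' ?ts // subrr normr0.
Qed.

Lemma maximin_usc :
  (forall x, 0 <= x <= 1 -> forall e, 0 < e -> exists2 r, 0 < r & forall b s,
     `|b0 - b| < r -> `|x - s| < r -> D b -> 0 <= s <= 1 ->
     inner_inf b s < maximin b0 + e) ->
  forall e, 0 < e -> exists2 r, 0 < r & forall b, `|b0 - b| < r -> D b ->
    maximin b <= maximin b0 + e.
Proof.
move=> inner_usc e e0.
pose Q b s := D b -> inner_inf b s < maximin b0 + e.
have [|r r0 H] := @compact_near_ball _ `[0, 1] Q b0 (@segment_compact _ 0 1).
  move=> x; rewrite /= in_itv /= => x01; have [r r0 H] := inner_usc x x01 e e0.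
  by exists r => // b s bb xs; rewrite /= in_itv /= => s01 Db; exact: H.
exists r => // b bb Db; apply: maximin_le => s s01.
by apply/ltW/H => //; rewrite /= in_itv.
Qed.

(* Where [lo] is not upper semicontinuous, the admissible choice [t = s] still
   bounds [inner_inf b s] by [P b s s], whence the second alternative. *)
Theorem maximin_continuous : open D ->
  (forall s, 0 <= s <= 1 -> forall e, 0 < e -> exists2 r, 0 < r &
     forall b, `|b0 - b| < r -> D b -> lo b0 s - e < lo b s) ->
  (forall x, 0 <= x <= 1 ->
     (forall e, 0 < e -> exists2 r, 0 < r & forall b s, `|b0 - b| < r -> `|x - s| < r ->
        D b -> 0 <= s <= 1 -> lo b s < lo b0 x + e)
     \/ P b0 x x <= maximin b0) ->
  {for b0, continuous maximin}.
Proof.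
move=> /(_ b0 Db0) /nbhs_ballP[d d0 dD] lo_lsc lo_usc.
have inner_usc x : 0 <= x <= 1 -> forall e, 0 < e -> exists2 r, 0 < r &
    forall b s, `|b0 - b| < r -> `|x - s| < r -> D b -> 0 <= s <= 1 ->
    inner_inf b s < maximin b0 + e.
  move=> x01 e e0; case: (lo_usc x x01) => [/(inner_inf_usc x01)/(_ e e0)[r r0 H]|diag].
    exists r => // b s bb xs Db s01; have := H b s bb xs Db s01.
    by have := inner_inf_le_maximin Db0 x01; lra.
  have [r r0 H] := P_ball x x Db0 e0.
  exists r => // b s bb xs Db s01; have /andP[_ los] := lo_bounds Db s01.
  have := H b s s bb xs xs; rewrite ltr_norml => /andP[? _].
  have sI : lo b s <= s <= s by rewrite los lexx.
  by have := inner_inf_le Db s01 sI; lra.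
apply: ball_continuous => e e0.
have [r1 r10 H1] := maximin_lsc lo_lsc e0.
have e2 : 0 < e / 2 by lra.
have [r2 r20 H2] := maximin_usc inner_usc e2.
exists (Num.min d (Num.min r1 r2)); first by rewrite !lt_min d0 r10 r20.
move=> b; rewrite !lt_min => /and3P[/dD Db /H1/(_ Db) ? /H2/(_ Db) ?].
by rewrite ltr_norml; apply/andP; split; lra.
Qed.

End Maximin.

Section XlnX.
Variable R : realType.
Implicit Types x u w X : R.

Definition xlnx x := x * ln x.

(* [u * Hent (X / u)] (see [mulr_Hent_div]), in a form continuous in [(u, X)]. *)
Definition Hent_scaled u X := xlnx u - xlnx X - xlnx (u - X).

Lemma xlnx0 : xlnx 0 = 0. Proof. by rewrite /xlnx mul0r. Qed.

Lemma xlnx_npos x : x <= 0 -> xlnx x = 0.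
Proof. by move=> x0; rewrite /xlnx ln0 // mulr0. Qed.

Lemma HentE x : Hent x = - xlnx x - xlnx (1 - x).
Proof.
by rewrite /Hent /xlnx; case: eqP => [->|_]; case: eqP => [->|_];
  rewrite ?mul0r ?oppr0 ?sub0r ?subr0 ?add0r ?addr0.
Qed.

Lemma xlnxM u w : 0 <= u -> 0 <= w -> xlnx (u * w) = w * xlnx u + u * xlnx w.
Proof.
rewrite le0r => /predU1P[->|u0]; first by rewrite mul0r xlnx0 mulr0 mul0r addr0.
rewrite le0r => /predU1P[->|w0]; first by rewrite mulr0 xlnx0 mulr0 mul0r addr0.
by rewrite /xlnx lnM ?posrE //; ring.
Qed.

Lemma mulr_Hent_div u X : 0 <= X <= u -> u * Hent (X / u) = Hent_scaled u X.
Proof.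
move=> /andP[X0 Xu]; have [u0|u0] := eqVneq u 0.
  have X00 : X = 0 by apply/eqP; rewrite eq_le X0 -u0 Xu.
  by rewrite /Hent_scaled u0 X00 mul0r subr0 xlnx0 !subr0.
have upos : 0 < u by rewrite lt_neqAle eq_sym u0 (le_trans X0 Xu).
have w0 : 0 <= X / u by rewrite divr_ge0 // ltW.
have w1 : 0 <= 1 - X / u by rewrite subr_ge0 ler_pdivrMr // mul1r.
have -> : Hent_scaled u X = Hent_scaled u (u * (X / u)) by rewrite mulrC divfK.
rewrite /Hent_scaled (_ : u - _ = u * (1 - X / u)); last by ring.
by rewrite (xlnxM (ltW upos) w0) (xlnxM (ltW upos) w1) HentE; ring.
Qed.

Lemma oppr_xlnx_le_sqrt x : 0 < x -> - xlnx x <= 2 * Num.sqrt x.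
Proof.
move=> x0; set y := Num.sqrt x; have y0 : 0 < y by rewrite sqrtr_gt0.
have lny : - ln y < y^-1 by rewrite -lnV ?posrE // ln_sublinear // invr_gt0.
have -> : x = y ^+ 2 by rewrite sqr_sqrtr // ltW.
have h : y ^+ 2 * - ln y <= y ^+ 2 * y^-1 by rewrite ler_pM2l ?exprn_gt0 // ltW.
rewrite [in X in _ <= X]expr2 mulfK ?lt0r_neq0 // in h.
rewrite /xlnx lnXn // mulr2n; nra.
Qed.

Lemma continuous_xlnx : continuous xlnx.
Proof.
move=> x; have [x0|x0|->] := ltgtP x 0.
- apply: ball_continuous => e e0; exists (- x); first by rewrite oppr_gt0.
  move=> y /ltr_distlCDr; rewrite subrr => y0.
  by rewrite !xlnx_npos ?subrr ?normr0 // ltW.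
- by apply: cvgM; [exact: cvg_id | exact: continuous_ln].
apply: ball_continuous => e e0; exists (Num.min 1 ((e / 2) ^+ 2)).
  by rewrite lt_min ltr01 exprn_gt0 // divr_gt0.
move=> y; rewrite xlnx0 !sub0r !normrN lt_min => /andP[y1 ye].
have [y0|y0] := leP y 0; first by rewrite xlnx_npos ?normr0.
rewrite gtr0_norm // in y1 ye; rewrite ler0_norm; last first.
  by rewrite /xlnx mulr_ge0_le0 ?ln_le0 ?ltW.
have : Num.sqrt y < e / 2.
  rewrite -(@gtr0_norm _ (e / 2)) ?divr_gt0 // -sqrtr_sqr ltr_sqrt //.
  by rewrite exprn_gt0 // divr_gt0.
by have := oppr_xlnx_le_sqrt y0; lra.
Qed.

End XlnX.

Lemma cvg_maxr (R : realType) T (F : set_system T) {FF : Filter F} (f g : T -> R) (x y : R) :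
  f @ F --> x -> g @ F --> y -> (fun z => Num.max (f z) (g z)) @ F --> Num.max x y.
Proof.
move=> fx gy; under eq_fun do rewrite maxr_absE; rewrite maxr_absE.
by apply: cvgM; [apply: cvgD; [exact: cvgD | apply: cvg_norm; exact: cvgB] | exact: cvg_cst].
Qed.

Lemma cvg_xlnx (R : realType) T (F : set_system T) {FF : Filter F} (f : T -> R) (x : R) :
  f @ F --> x -> (fun z => xlnx (f z)) @ F --> xlnx x.
Proof. by move=> fx; apply: continuous_cvg => //; exact: continuous_xlnx. Qed.

Ltac cvg_arith :=
  repeat match goal with
  | |- (fun _ => ?C) @ _ --> _ => apply: cvg_cst
  | |- (fun x => @?A x + @?B x) @ _ --> _ => apply: cvgD
  | |- (fun x => @?A x * @?B x) @ _ --> _ => apply: cvgM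
  | |- (fun x => - @?A x) @ _ --> _ => apply: cvgN
  | |- (fun x => (@?A x)^-1) @ _ --> _ => apply: cvgV
  | |- (fun x => `|@?A x|) @ _ --> _ => apply: cvg_norm
  | |- (fun x => Num.max (@?A x) (@?B x)) @ _ --> _ => apply: cvg_maxr
  | |- (fun x => xlnx (@?A x)) @ _ --> _ => apply: cvg_xlnx
  end.

Section Amls.
Variables (R : realType) (a c : R).

(* [M_ab a b (s / b)] in the rescaled variable [s = b * kappa] (see [tau_minE]);
   for [s <= 1] the denominator of the first summand vanishes only at
   [(b, s) = (a, 1)], which is thus the one discontinuity of [tau_min] on [b > 0]. *)
Definition tau_min (b s : R) : R :=
  Num.max (b - a) 0 * s / (`|b - a| + a * (1 - s)) +
  Num.max (a - b) 0 * s / ((a - 1) * b).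

(* [g_abc a b c kappa t] in the variables [s = b * kappa] and [y = (s - t) / a],
   for which [t * gamma = kappa - y] and [(1 - t) * delta = y] (see [g_abcE]). *)
Definition g_xlnx (k y t : R) : R :=
  y * ln c - Hent_scaled t (k - y) - Hent_scaled (1 - t) y - xlnx k - xlnx (1 - k).

Definition g_rescaled (b s t : R) : R := g_xlnx (s / b) ((s - t) / a) t.

Lemma tau_min_cvg T (F : set_system T) {FF : Filter F} (fb fs : T -> R) (b s : R) :
  1 < a -> b != 0 -> `|b - a| + a * (1 - s) != 0 -> fb @ F --> b -> fs @ F --> s ->
  (fun x => tau_min (fb x) (fs x)) @ F --> tau_min b s.
Proof.
move=> a1 b0 den0 fbb fss; rewrite /tau_min; cvg_arith => //.
by rewrite mulf_neq0 // lt0r_neq0 // subr_gt0.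
Qed.

Lemma g_rescaled_cvg T (F : set_system T) {FF : Filter F} (fb fs ft : T -> R) (b s t : R) :
  b != 0 -> fb @ F --> b -> fs @ F --> s -> ft @ F --> t ->
  (fun x => g_rescaled (fb x) (fs x) (ft x)) @ F --> g_rescaled b s t.
Proof. by move=> b0 fbb fss ftt; rewrite /g_rescaled /g_xlnx /Hent_scaled; cvg_arith. Qed.

Lemma tau_min_cont b s : 1 < a -> b != 0 -> s <= 1 -> (b, s) != (a, 1) ->
  {for (b, s), continuous (fun p : R * R => tau_min p.1 p.2)}.
Proof.
move=> a1 b0 s1 bs; apply: tau_min_cvg cvg_fst cvg_snd => //=.
have as0 : 0 <= a * (1 - s) by rewrite mulr_ge0 ?subr_ge0 //; lra.
rewrite lt0r_neq0 //; have [ba|ba] := eqVneq b a; last first.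
  have : 0 < `|b - a| by rewrite normr_gt0 subr_eq0.
  lra.
move: bs; rewrite ba subrr normr0 add0r xpair_eqE eqxx /= => s_neq1.
by rewrite mulr_gt0 ?subr_gt0 ?lt_neqAle ?s_neq1 //; lra.
Qed.

Lemma g_rescaled_cont b s t : b != 0 ->
  {for (b, s, t), continuous (fun p : R * R * R => g_rescaled p.1.1 p.1.2 p.2)}.
Proof.
move=> b0; apply: g_rescaled_cvg cvg_snd => //.
  exact: cvg_comp cvg_fst cvg_fst.
exact: cvg_comp cvg_fst cvg_snd.
Qed.

Lemma tau_min_gt b s : a < b -> tau_min b s = (b - a) * s / (b - a * s).
Proof.
move=> ab; rewrite /tau_min gtr0_norm ?subr_gt0 // max_l ?subr_ge0 ?ltW //.
rewrite max_r ?subr_le0 ?ltW // !mul0r addr0; congr (_ / _); ring.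
Qed.

Lemma tau_min_lt b s : b < a -> tau_min b s = (a - b) * s / ((a - 1) * b).
Proof.
move=> ba; rewrite /tau_min max_r ?subr_le0 ?ltW // max_l ?subr_ge0 ?ltW //.
by rewrite !mul0r add0r.
Qed.

Lemma tau_min_at_a s : tau_min a s = 0.
Proof. by rewrite /tau_min subrr maxxx !mul0r addr0. Qed.

Lemma tau_minE b s : b != 0 -> M_ab a b (s / b) = tau_min b s.
Proof.
move=> b0; rewrite /M_ab; case: ltgtP => ab; last by rewrite -ab tau_min_at_a.
- rewrite tau_min_gt // (_ : b - a * s = b * (1 - a * (s / b))); last by field.
  by rewrite invfM; ring.
- by rewrite tau_min_lt // invfM; ring.
Qed.

Lemma tau_min_bounds b s : 1 < a -> 1 < b -> 0 <= s <= 1 -> 0 <= tau_min b s <= s.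
Proof.
move=> a1 b1 /andP[s0 s1]; case: (ltgtP a b) => ab; last by rewrite -ab tau_min_at_a s0 lexx.
- have den : 0 < b - a * s by nra.
  rewrite tau_min_gt // divr_ge0 ?(ltW den) ?mulr_ge0 ?subr_ge0 ?(ltW ab) //=.
  have : 0 <= a * s * (1 - s) by rewrite !mulr_ge0 ?subr_ge0 //; lra.
  by rewrite ler_pdivrMr //; nra.
- have den : 0 < (a - 1) * b by rewrite mulr_gt0 ?subr_gt0 //; lra.
  rewrite tau_min_lt // divr_ge0 ?(ltW den) ?mulr_ge0 ?subr_ge0 ?(ltW ab) //=.
  have : 0 <= a * s * (b - 1) by rewrite !mulr_ge0 ?subr_ge0 //; lra.
  by rewrite ler_pdivrMr //; nra.
Qed.

Lemma tgamma_bounds b s t : 1 < a -> 1 < b -> 0 <= s <= 1 -> tau_min b s <= t <= s ->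
  0 <= s / b - (s - t) / a <= t.
Proof.
move=> a1 b1 s01 /andP[lot ts].
have /andP[lo0 _] := tau_min_bounds a1 b1 s01; case/andP: s01 => s0 s1.
have t0 : 0 <= t by lra.
have bt0 : 0 <= b * t by rewrite mulr_ge0 //; lra.
have abt0 : 0 <= (a - 1) * b * t by rewrite !mulr_ge0 //; lra.
have [lo1 lo2] : (b - a) * s <= b * t /\ (a - b) * s <= (a - 1) * b * t.
  case: (ltgtP a b) => ab; last by split; nra.
  - have den : 0 < b - a * s by nra.
    have : 0 <= t * a * s by rewrite !mulr_ge0 //; lra.
    by move: lot; rewrite tau_min_gt // ler_pdivrMr // => ? ?; split; nra.
  - have den : 0 < (a - 1) * b by rewrite mulr_gt0 ?subr_gt0 //; lra.
    by move: lot; rewrite tau_min_lt // ler_pdivrMr // => ?; split; nra.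
have ab : 0 < a * b by apply: mulr_gt0; lra.
rewrite (_ : _ - _ = (b * t - (b - a) * s) / (a * b)); last first.
  by field; rewrite !lt0r_neq0 //; lra.
by rewrite divr_ge0 ?subr_ge0 ?(ltW ab) //= ler_pdivrMr //; nra.
Qed.

Lemma g_abcE b s t : 1 < a -> 1 < b -> 0 <= s <= 1 -> tau_min b s <= t <= s ->
  g_abc a b c (s / b) t = g_rescaled b s t.
Proof.
move=> a1 b1 s01 tI; have tX := tgamma_bounds a1 b1 s01 tI.
have /andP[lo0 _] := tau_min_bounds a1 b1 s01.
case/andP: s01 tI => s0 s1 /andP[lot ts].
have a0 : a != 0 by rewrite lt0r_neq0 //; lra.
have b0 : b != 0 by rewrite lt0r_neq0 //; lra.
have y1 : 0 <= (s - t) / a <= 1 - t.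
  rewrite divr_ge0 ?subr_ge0 //=; last lra.
  rewrite ler_pdivrMr; last lra.
  have : 0 <= (a - 1) * (1 - t) by rewrite mulr_ge0 ?subr_ge0 //; lra.
  nra.
have Eg : t * Hent (gamma_ab a b (s / b) t) = Hent_scaled t (s / b - (s - t) / a).
  rewrite -mulr_Hent_div // /gamma_ab; have [->|t0] := eqVneq t 0; first by rewrite !mul0r.
  by congr (_ * Hent _); field; rewrite t0 a0 b0.
have Ed : (1 - t) * Hent (delta_ab a b (s / b) t) = Hent_scaled (1 - t) ((s - t) / a).
  rewrite -mulr_Hent_div // /delta_ab.
  have [->|t1] := eqVneq t 1; first by rewrite subrr !mul0r.
  by congr (_ * Hent _); field; rewrite a0 b0 andbT subr_eq0 eq_sym t1.
rewrite /g_abc Eg Ed HentE /g_rescaled /g_xlnx (_ : b * (s / b) = s); last by field.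
by ring.
Qed.

Lemma g_rescaled00 b : g_rescaled b 0 0 = 0.
Proof.
rewrite /g_rescaled /g_xlnx /Hent_scaled !(mul0r, subrr, subr0) xlnx0.
by rewrite /xlnx ln1 mulr0 !subr0.
Qed.

Lemma g_rescaled_a11 : 1 < a -> g_rescaled a 1 1 = 0.
Proof.
move=> a1; rewrite /g_rescaled /g_xlnx /Hent_scaled !(subrr, mul0r, subr0, sub0r) xlnx0.
rewrite /xlnx ln1 mulr0; lra.
Qed.

Lemma inner_minE b s : 1 < a -> 1 < b -> 0 <= s <= 1 ->
  inner_min a b c (s / b) = inner_inf g_rescaled tau_min b s.
Proof.
move=> a1 b1 s01; have b0 : b != 0 by rewrite lt0r_neq0 //; lra.
rewrite /inner_min /inner_inf tau_minE // (_ : b * (s / b) = s); last by field.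
by congr inf; apply: eq_imagel => t; rewrite /= in_itv /=; exact: g_abcE.
Qed.

Lemma amlsE b : 1 < a -> 1 < b -> amls a c b = expR (maximin g_rescaled tau_min b).
Proof.
move=> a1 b1; have b0 : 0 < b by lra.
rewrite /amls /maximin; congr (expR (sup _)).
apply/seteqP; split => _ [x /= /[!in_itv]/= /andP[x0 x1] <-].
- have bx : 0 <= b * x <= 1.
    by rewrite mulr_ge0 ?(ltW b0) //= mulrC -ler_pdivlMr // div1r.
  exists (b * x); rewrite /= ?in_itv // -inner_minE //.
  by congr inner_min; field; rewrite lt0r_neq0.
- have xb : 0 <= x / b <= b^-1.
    by rewrite divr_ge0 ?(ltW b0) //= ler_pdivrMr // mulVf // lt0r_neq0.
  by exists (x / b); rewrite /= ?in_itv // inner_minE // x0 x1.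
Qed.

Lemma maximin_g_rescaled_continuous b0 : 1 < a -> 1 < b0 ->
  {for b0, continuous (maximin g_rescaled tau_min)}.
Proof.
move=> a1 b01.
have g_cont b s t : 1 < b ->
    {for (b, s, t), continuous (fun p : R * R * R => g_rescaled p.1.1 p.1.2 p.2)}.
  by move=> b1; apply: g_rescaled_cont; rewrite lt0r_neq0 //; lra.
have lo_bounds := tau_min_bounds a1.
have tau_ball x e : x <= 1 -> (b0, x) != (a, 1) -> 0 < e -> exists2 r, 0 < r & forall b s,
    `|b0 - b| < r -> `|x - s| < r -> `|tau_min b0 x - tau_min b s| < e.
  move=> x1 b0x; apply: continuous2_ball; apply: tau_min_cont b0x => //.
  by rewrite lt0r_neq0 //; lra.
apply: (maximin_continuous g_cont lo_bounds b01 (@open_gt _ 1)).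
- move=> s /andP[_ s1] e e0; have [[-> ->]|b0s] := eqVneq (b0, s) (a, 1).
    exists 1 => // b _ b1; rewrite tau_min_at_a.
    have /andP[? _] : 0 <= tau_min b 1 <= 1 by rewrite lo_bounds // ler01 lexx.
    lra.
  have [r r0 H] := tau_ball s e s1 b0s e0.
  exists r => // b bb _; have := H b s bb; rewrite subrr normr0 => /(_ r0).
  by rewrite ltr_norml => /andP[_ ?]; lra.
- move=> x /andP[_ x1]; have [[-> ->]|b0x] := eqVneq (b0, x) (a, 1).
    right; rewrite g_rescaled_a11 // -(g_rescaled00 a).
    exact: (P00_le_maximin g_cont lo_bounds a1).
  left => e e0; have [r r0 H] := tau_ball x e x1 b0x e0.
  exists r => // b s bb xs _ _; have := H b s bb xs.
  by rewrite ltr_norml => /andP[? _]; lra.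
Qed.

End Amls.

Theorem lemma5p6 (R : realType) (alpha c : R) :
  1 < alpha -> 1 < c ->
  {within [set x : R | 1 < x], continuous (fun x : R => amls alpha c x)}.
Proof.
move=> a1 _; apply: continuous_in_subspaceT => b; rewrite inE /= => b1.
have amls_near : \forall x \near b,
    expR (maximin (g_rescaled alpha c) (tau_min alpha) x) = amls alpha c x.
  have : \forall x \near b, 1 < x := @open_gt _ 1 b b1.
  by apply: filterS => x x1; rewrite amlsE.
apply: cvg_trans (near_eq_cvg amls_near) _; rewrite /= amlsE //.
by apply: continuous_cvg; [exact: continuous_expR | exact: maximin_g_rescaled_continuous].
Qed.
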